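(* Let $G=(V,E)$ be a finite simple graph. A measurement schedule on $|G\rangle$ is optimal if it is given by a path decomposition of $G$ of minimal width; in particular, $\operatorname{sc}(|G\rangle)=\operatorname{pw}(G)+1$.
   Context: The graph state of $G$ is $|G\rangle=\left(\prod_{e\in E} CZ_e\right)|+\rangle^{\otimes V}$, with one qubit per vertex. A measurement schedule on $|G\rangle$ is represented by a sequence $(X_i)_{i=1}^n$ of subsets of $V$, where $X_i$ is the set of active qubits (initialised but not yet measured) at step $i$, satisfying: (M1) each qubit is initialised exactly once (every $v\in V$ lies in some $X_i$, and the indices $i$ with $v\in X_i$ form a contiguous block, after which $v$ is measured); (M2) a qubit is measured only after all its neighbours have been initialised (if $j$ is the last index with $v\in X_j$, every neighbour of $v$ lies in some $X_i$ with $i\le j$). The cost of a measurement schedule is $\max_i |X_i|$; the spatial cost $\operatorname{sc}(|G\rangle)$ is the minimum cost over all measurement schedules on $|G\rangle$, and a schedule is optimal if its cost equals the spatial cost. A path decomposition of $G$ is a sequence $(X_i)_{i=1}^n$ of subsets of $V$ such that (P1) every vertex lies in some $X_i$, (P2) every edge is contained in some $X_i$, (P3) for $i\le j\le k$, $v\in X_i\cap X_k$ implies $v\in X_j$. Its width is $\max_i|X_i|-1$, and the pathwidth $\operatorname{pw}(G)$ is the minimum width over all path decompositions of $G$. *)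

(* A finite simple graph is a symmetric irreflexive
   relation e on a finType T (vertex set V = T). *)
From mathcomp Require Import all_boot all_order all_algebra.
From Stdlib Require Import ClassicalEpsilon.
Set Implicit Arguments. Unset Strict Implicit. Unset Printing Implicit Defensive.

Section Graphs.
Variables (T : finType) (e : rel T).

(* the i-th set X_(i+1) of a sequence (indices 0 .. size s - 1) *)
Definition bag (s : seq {set T}) (i : nat) : {set T} := nth set0 s i.

Definition contiguous (s : seq {set T}) : Prop :=
  forall v i j k, i <= j -> j <= k -> k < size s ->
    v \in bag s i -> v \in bag s k -> v \in bag s j.

Definition measurement_schedule (s : seq {set T}) : Prop :=
  (forall v, exists2 i, i < size s & v \in bag s i) /\
  contiguous s /\
  (forall v j, j < size s -> v \in bag s j ->
     (forall j', j < j' -> j' < size s -> v \notin bag s j') ->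
     forall u, e v u -> exists2 i, i <= j & u \in bag s i).

Definition path_decomposition (s : seq {set T}) : Prop :=
  (forall v, exists2 i, i < size s & v \in bag s i) /\
  (forall u v, e u v -> exists i, [/\ i < size s, u \in bag s i & v \in bag s i]) /\
  contiguous s.

Definition cost (s : seq {set T}) : nat := \max_(X <- s) #|X|.

(* width = max_i |X_i| - 1, as an integer (it is -1 for an all-empty sequence) *)
Definition width (s : seq {set T}) : int := ((cost s)%:Z - 1)%R.

Definition sc_pred (n : nat) : bool :=
  if excluded_middle_informative
       (exists s, measurement_schedule s /\ cost s = n) then true else false.

Definition pw_pred (n : nat) : bool :=
  if excluded_middle_informative
       (exists s, path_decomposition s /\ cost s = n) then true else false.

Lemma setT_schedule : measurement_schedule [:: setT].
Proof.
split; [|split].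
- by move=> v; exists 0 => //; rewrite /bag /= in_setT.
- move=> v i j k hij hjk; rewrite ltnS leqn0 => /eqP k0.
  by subst k; move: hjk; rewrite leqn0 => /eqP ->.
- move=> v j hj _ _ u _; exists 0 => //; by rewrite /bag /= in_setT.
Qed.

Lemma setT_pathdec : path_decomposition [:: setT].
Proof.
split; [|split].
- by move=> v; exists 0 => //; rewrite /bag /= in_setT.
- by move=> u v _; exists 0; rewrite /bag /= !in_setT.
- move=> v i j k hij hjk; rewrite ltnS leqn0 => /eqP k0.
  by subst k; move: hjk; rewrite leqn0 => /eqP ->.
Qed.

Lemma sc_ex : exists n, sc_pred n.
Proof.
exists (cost [:: setT]); rewrite /sc_pred.
case: excluded_middle_informative => // H; exfalso; apply: H.
by exists [:: setT]; split => //; exact: setT_schedule.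
Qed.

Lemma pw_ex : exists n, pw_pred n.
Proof.
exists (cost [:: setT]); rewrite /pw_pred.
case: excluded_middle_informative => // H; exfalso; apply: H.
by exists [:: setT]; split => //; exact: setT_pathdec.
Qed.

Definition sc : nat := ex_minn sc_ex.

Definition pw : int := ((ex_minn pw_ex)%:Z - 1)%R.

Definition optimal_schedule (s : seq {set T}) : Prop :=
  measurement_schedule s /\ cost s = sc.

End Graphs.

(* A measurement schedule and a path decomposition are the same thing.
   If an edge uv lies in some bag X_i, then neither endpoint can be measured
   before step i, which is (M2). Conversely, given (M2), let u be the endpoint
   of an edge uv that is measured first, say after step j: v was initialised
   at some step <= j and is not measured before step j, so by contiguity v is
   in X_j together with u, which is (P2). Hence both minimisations range over
   the same sequences with the same costs, so sc = min cost = pw + 1, and a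
   minimum-width path decomposition is a minimum-cost schedule. *)
From mathcomp Require Import all_boot all_order all_algebra.
From Stdlib Require Import ClassicalEpsilon.
Import GRing.Theory Num.Theory.
Local Open Scope ring_scope.

Section Schedules.
Variables (T : finType) (e : rel T).

Definition last_bag (s : seq {set T}) (v : T) (j : nat) : Prop :=
  [/\ (j < size s)%N, v \in bag s j &
    forall j', (j < j')%N -> (j' < size s)%N -> v \notin bag s j'].

Lemma last_bag_index {s : seq {set T}} {v : T} :
  (exists2 i, (i < size s)%N & v \in bag s i) -> exists j, last_bag s v j.
Proof.
move=> [i lt_i_s v_i].
have ex_in : exists n, (n < size s)%N && (v \in bag s n).
  by exists i; rewrite lt_i_s v_i.
have bounded n : (n < size s)%N && (v \in bag s n) -> (n <= size s)%N.
  by case/andP=> /ltnW.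
case: (ex_maxnP ex_in bounded) => j /andP[lt_j_s v_j] j_max.
exists j; split=> // j' lt_j_j' lt_j'_s; apply/negP => v_j'.
by have := j_max j' (introT andP (conj lt_j'_s v_j')); rewrite leqNgt lt_j_j'.
Qed.

Lemma path_decomposition_schedule (s : seq {set T}) :
  path_decomposition e s -> measurement_schedule e s.
Proof.
move=> [covered [edge_covered contig]]; split=> //; split=> //.
move=> v j _ _ v_gone u e_vu.
case: (edge_covered _ _ e_vu) => i [lt_i_s v_i u_i].
exists i => //; rewrite leqNgt; apply/negP => lt_j_i.
by move: (v_gone i lt_j_i lt_i_s); rewrite v_i.
Qed.

Lemma schedule_neighbour_in_last_bag {s : seq {set T}} {u v : T} {ju jv : nat} :
  measurement_schedule e s -> last_bag s u ju -> (ju <= jv)%N ->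
  (jv < size s)%N -> v \in bag s jv -> e u v -> v \in bag s ju.
Proof.
move=> [_ [contig measured_late]] [lt_ju_s u_ju u_gone] le_ju_jv lt_jv_s v_jv e_uv.
case: (measured_late u ju lt_ju_s u_ju u_gone v e_uv) => i le_i_ju v_i.
exact: (contig v i ju jv).
Qed.

Hypothesis e_sym : symmetric e.

Lemma schedule_path_decomposition (s : seq {set T}) :
  measurement_schedule e s -> path_decomposition e s.
Proof.
move=> sched; have [covered [contig _]] := sched; split=> //; split=> //.
move=> u v e_uv.
have [ju last_u] := last_bag_index (covered u).
have [jv last_v] := last_bag_index (covered v).
have [lt_ju_s u_ju _] := last_u; have [lt_jv_s v_jv _] := last_v.
case: (leqP ju jv) => [le_ju_jv | /ltnW le_jv_ju].
- exists ju; split=> //.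
  exact: (schedule_neighbour_in_last_bag sched last_u le_ju_jv).
- exists jv; split=> //.
  by apply: (schedule_neighbour_in_last_bag sched last_v le_jv_ju); rewrite // e_sym.
Qed.

Lemma sc_predE : sc_pred e =1 pw_pred e.
Proof.
move=> n; rewrite /sc_pred /pw_pred.
case: excluded_middle_informative => [[s [sched cost_s]] | no_sched];
  case: excluded_middle_informative => [[s' [dec cost_s']] | no_dec] //.
- by case: no_dec; exists s; split=> //; exact: schedule_path_decomposition.
- by case: no_sched; exists s'; split=> //; exact: path_decomposition_schedule.
Qed.

Lemma sc_min_cost_path_decomposition : sc e = ex_minn (pw_ex e).
Proof. exact: eq_ex_minn sc_predE. Qed.

End Schedules.

Theorem corollary1 (T : finType) (e : rel T)
    (e_sym : symmetric e) (e_irr : irreflexive e) :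
  (forall s : seq {set T}, path_decomposition e s -> width s = pw e ->
     optimal_schedule e s) /\
  (sc e)%:Z = pw e + 1.
Proof.
have scE := @sc_min_cost_path_decomposition T e e_sym.
split; last by rewrite scE /pw subrK.
move=> s dec_s width_s; split; first exact: path_decomposition_schedule.
move: width_s; rewrite /width /pw scE => /eqP.
by rewrite (inj_eq (addIr _)) => /eqP [].
Qed.
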